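(* There exists a radial weight $\omega\notin\widehat{\mathcal{D}}$ such that $\widetilde{\omega}$ is a radial weight and $\widetilde{\omega}\in\widehat{\mathcal{D}}$.
   Context: A radial weight is a non-negative $\omega\in L^1([0,1))$, extended to the unit disc by $\omega(z)=\omega(|z|)$, with $\widehat{\omega}(r)=\int_r^1\omega(s)\,ds>0$ for all $0\le r<1$. $\widetilde{\omega}(r)=\frac{\widehat{\omega}(r)}{1-r}$ for $0\le r<1$. A radial weight $\nu$ belongs to $\widehat{\mathcal{D}}$ if there is $C=C(\nu)\ge1$ with $\widehat{\nu}(r)\le C\,\widehat{\nu}\big(\frac{1+r}{2}\big)$ for all $0\le r<1$, where $\widehat\nu(r)=\int_r^1\nu(s)\,ds$. *)

From Stdlib Require Import Reals Lra.
Open Scope R_scope.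

(* I.e. W r = int_r^1 w(s) ds  (= \widehat{w}(r)). *)
Definition hat_is (w W : R -> R) : Prop :=
  forall r, 0 <= r < 1 ->
    (forall t, r <= t < 1 -> inhabited (Riemann_integrable w r t)) /\
    (forall eps, 0 < eps -> exists d, 0 < d /\
       forall t (pr : Riemann_integrable w r t),
         r <= t -> t < 1 -> 1 - d < t -> Rabs (RiemannInt pr - W r) < eps).

Definition radial_weight (w W : R -> R) : Prop :=
  (forall r, 0 <= r < 1 -> 0 <= w r) /\
  hat_is w W /\
  (forall r, 0 <= r < 1 -> 0 < W r).

(* Doubling class \widehat{D}, expressed through the tail integral W. *)
Definition Dhat (W : R -> R) : Prop :=
  exists C, 1 <= C /\ forall r, 0 <= r < 1 -> W r <= C * W ((1 + r) / 2).

Definition tilde (W : R -> R) : R -> R := fun r => W r / (1 - r).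

(* Write W = \widehat{omega} and V = \widehat{tilde omega}, so that
   V(r) = int_r^1 W(s)/(1-s) ds.  Two general facts drive the proof:
   - if W <= V on [0,1), then V is doubling (dominated_tail_Dhat): on
     [r, (1+r)/2] the integrand W/(1-s) is controlled by V itself;
   - W fails to be doubling as soon as it drops by an unbounded factor
     when 1 - r is halved.
   We build W piecewise on a partition 0 = p 0 < p 1 < ... of [0,1): on the
   k-th piece W is a multiple of (1 - r)^(gam k), so V is explicit there too.
   Breakpoint values w k of W and v k of V are prescribed, and gam k is the
   exponent making W and V match both sequences; W <= V then reduces to
   w k <= v k.  The levels alternate between a huge drop of W at an almost
   constant V (large exponents, destroying doubling of W) and a long slow
   stretch (tiny exponents) letting V catch up.  The file proves the two
   criteria, the gluing of piecewise primitives along a partition, the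
   general construction, and finally the choice of the levels. *)
From Stdlib Require Import Reals Lra Lia ClassicalEpsilon.
From Coquelicot Require Import Coquelicot.
Open Scope R_scope.

Lemma exp_le a b : a <= b -> exp a <= exp b.
Proof.
  intros Hab. destruct (Rle_lt_or_eq_dec _ _ Hab) as [Hlt|Heq].
  - left. now apply exp_increasing.
  - rewrite Heq. lra.
Qed.

Lemma hat_is_of_primitive (f F : R -> R) :
  (forall a b, 0 <= a -> a <= b -> b < 1 -> is_RInt f a b (F a - F b)) ->
  (forall eps, 0 < eps -> exists d, 0 < d /\
     forall t, 0 <= t < 1 -> 1 - d < t -> Rabs (F t) < eps) ->
  hat_is f F.
Proof.
  intros Hint Htail r Hr. split.
  - intros t Ht. constructor. apply ex_RInt_Reals_0. eexists. apply Hint; lra.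
  - intros eps Heps. destruct (Htail eps Heps) as [d [Hd Hsmall]].
    exists d. split; [exact Hd|]. intros t pr Hrt Ht1 Htd.
    rewrite <- RInt_Reals, (is_RInt_unique _ _ _ _ (Hint r t ltac:(lra) Hrt Ht1)).
    replace (F r - F t - F r) with (- F t) by ring.
    rewrite Rabs_Ropp. apply Hsmall; lra.
Qed.

(* Integrating tilde W <= V/(1-s)
   over two consecutive quarter-steps towards 1 gives the constant 3. *)
Section DominatedTail.

Variables W V : R -> R.
Hypothesis V_primitive : forall a b, 0 <= a -> a <= b -> b < 1 ->
  is_RInt (tilde W) a b (V a - V b).
Hypothesis W_dominated : forall r, 0 <= r < 1 -> 0 <= W r <= V r.

Lemma tail_nonincreasing a b : 0 <= a -> a <= b -> b < 1 -> V b <= V a.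
Proof.
  intros Ha Hab Hb. pose proof (V_primitive a b Ha Hab Hb) as HI.
  assert (Hpos : 0 <= RInt (tilde W) a b).
  { apply RInt_ge_0; [exact Hab | eexists; exact HI|].
    intros x Hx. unfold tilde. destruct (W_dominated x ltac:(lra)).
    apply Rdiv_le_0_compat; lra. }
  rewrite (is_RInt_unique _ _ _ _ HI) in Hpos. lra.
Qed.

(* On [a,m] the integrand is at most V a / (1 - m). *)
Lemma tail_decrement a m : 0 <= a -> a <= m -> m < 1 ->
  V a - V m <= (m - a) * (V a / (1 - m)).
Proof.
  intros Ha Ham Hm. pose proof (V_primitive a m Ha Ham Hm) as HI.
  rewrite <- (is_RInt_unique _ _ _ _ HI).
  assert (Hle : RInt (tilde W) a m <= RInt (fun _ => V a / (1 - m)) a m).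
  { apply RInt_le; [exact Ham | eexists; exact HI | apply ex_RInt_const |].
    intros x Hx. unfold tilde.
    destruct (W_dominated x ltac:(lra)) as [_ HWV].
    pose proof (tail_nonincreasing a x Ha ltac:(lra) ltac:(lra)).
    destruct (W_dominated a ltac:(lra)).
    apply Rle_trans with (V a / (1 - x)).
    - apply Rmult_le_compat_r; [left; apply Rinv_0_lt_compat|]; lra.
    - apply Rmult_le_compat_l; [lra|]. apply Rinv_le_contravar; lra. }
  rewrite RInt_const in Hle. exact Hle.
Qed.

Lemma dominated_tail_Dhat : Dhat V.
Proof.
  exists 3. split; [lra|]. intros r Hr.
  set (m := (1 + 3 * r) / 4). set (h := (1 + r) / 2).
  pose proof (tail_decrement r m ltac:(lra) ltac:(unfold m; lra) ltac:(unfold m; lra)) as B1.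
  pose proof (tail_decrement m h ltac:(unfold m; lra) ltac:(unfold m, h; lra)
    ltac:(unfold h; lra)) as B2.
  replace ((m - r) * (V r / (1 - m))) with (V r / 3) in B1 by (unfold m; field; lra).
  replace ((h - m) * (V m / (1 - h))) with (V m / 2) in B2 by (unfold m, h; field; lra).
  lra.
Qed.

End DominatedTail.

Record partition (p : nat -> R) : Prop := {
  partition_0 : p 0%nat = 0;
  partition_incr : forall k, p k < p (S k);
  partition_exhaust : forall a, a < 1 -> exists k, a < p k }.

Section Partition.

Variable p : nat -> R.
Hypothesis Hp : partition p.

Lemma partition_le m n : (m <= n)%nat -> p m <= p n.
Proof.
  induction 1; [lra|]. pose proof (partition_incr p Hp m0). lra.
Qed.

Lemma piece_unique a j n : p j <= a < p (S j) -> p n <= a < p (S n) -> j = n.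
Proof.
  intros Hj Hn. destruct (Compare_dec.lt_eq_lt_dec j n) as [[Hlt|Heq]|Hgt]; auto.
  - pose proof (partition_le (S j) n Hlt). lra.
  - pose proof (partition_le (S n) j Hgt). lra.
Qed.

Definition piece (a : R) : nat :=
  epsilon (inhabits 0%nat) (fun n => p n <= a < p (S n)).

Lemma piece_eq a n : p n <= a < p (S n) -> piece a = n.
Proof.
  intros Hn. apply (piece_unique a); [|exact Hn].
  unfold piece. apply epsilon_spec. exists n. exact Hn.
Qed.

Lemma piece_spec a : 0 <= a < 1 -> p (piece a) <= a < p (S (piece a)).
Proof.
  intros Ha. destruct (partition_exhaust p Hp a (proj2 Ha)) as [N HN].
  assert (Hex : exists n, p n <= a < p (S n)).
  { induction N as [|N IH]; [pose proof (partition_0 p Hp); lra|].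
    destruct (Rlt_or_le a (p N)) as [HaN|HaN]; [now apply IH | now exists N]. }
  destruct Hex as [n Hn]. now rewrite (piece_eq a n Hn).
Qed.

Definition glue (F : nat -> R -> R) (a : R) : R := F (piece a) a.

Lemma glue_interior F k a : p k < a < p (S k) -> glue F a = F k a.
Proof. intros Ha. unfold glue. rewrite (piece_eq a k); [reflexivity | lra]. Qed.

Lemma glue_closed F k a :
  (forall j, F j (p (S j)) = F (S j) (p (S j))) ->
  p k <= a <= p (S k) -> glue F a = F k a.
Proof.
  intros Hmatch [Ha1 Ha2]. destruct (Rle_lt_or_eq_dec _ _ Ha2) as [Hlt|Heq].
  - unfold glue. rewrite (piece_eq a k); [reflexivity | lra].
  - subst a. unfold glue. rewrite (piece_eq (p (S k)) (S k)), Hmatch; [reflexivity|].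
    pose proof (partition_incr p Hp (S k)). lra.
Qed.

Lemma is_RInt_by_pieces (f G : R -> R) :
  (forall k a b, p k <= a -> a <= b -> b <= p (S k) -> is_RInt f a b (G a - G b)) ->
  forall a b, 0 <= a -> a <= b -> b < 1 -> is_RInt f a b (G a - G b).
Proof.
  intros Hpiece.
  assert (Hchain : forall a b c, is_RInt f a b (G a - G b) -> is_RInt f b c (G b - G c) ->
            is_RInt f a c (G a - G c)).
  { intros a b c H1 H2. replace (G a - G c) with (plus (G a - G b) (G b - G c))
      by (unfold plus; simpl; ring). exact (is_RInt_Chasles f a b c _ _ H1 H2). }
  assert (Hupto : forall m a b, 0 <= a -> a <= b -> b <= p m -> is_RInt f a b (G a - G b)).
  { induction m as [|m IH]; intros a b Ha Hab Hb.
    - pose proof (partition_0 p Hp). pose proof (partition_incr p Hp 0).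
      apply (Hpiece 0%nat); lra.
    - destruct (Rle_lt_dec b (p m)) as [Hbm|Hbm]; [now apply IH|].
      destruct (Rle_lt_dec (p m) a) as [Ham|Ham]; [now apply (Hpiece m)|].
      apply Hchain with (p m); [apply IH; lra | apply (Hpiece m); lra]. }
  intros a b Ha Hab Hb. destruct (partition_exhaust p Hp b Hb) as [m Hm].
  apply (Hupto m); lra.
Qed.

Lemma glue_primitive (F f : nat -> R -> R) :
  (forall k, F k (p (S k)) = F (S k) (p (S k))) ->
  (forall k x, p k <= x <= p (S k) -> is_derive (fun r => - F k r) x (f k x)) ->
  (forall k x, p k <= x <= p (S k) -> continuous (f k) x) ->
  forall a b, 0 <= a -> a <= b -> b < 1 -> is_RInt (glue f) a b (glue F a - glue F b).
Proof.
  intros Hmatch Hder Hcont. apply is_RInt_by_pieces. intros k a b Ha Hab Hb.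
  rewrite (glue_closed F k a), (glue_closed F k b); try assumption; try lra.
  apply is_RInt_ext with (f k).
  { intros x Hx. rewrite Rmin_left, Rmax_right in Hx by lra.
    symmetry. apply glue_interior. lra. }
  replace (F k a - F k b) with (minus (- F k b) (- F k a))
    by (unfold minus, plus, opp; simpl; ring).
  apply (is_RInt_derive (fun r => - F k r)); intros x Hx;
    rewrite Rmin_left, Rmax_right in Hx by lra.
  - apply Hder; lra.
  - apply Hcont; lra.
Qed.

End Partition.

(* Given levels w k decreasing to 0 (values of W at the
   breakpoints) and levels v k >= w k decreasing to 0 (values of V), piece k
   of W is a power (1 - r)^gam k, the exponent being forced by the condition
   that the tail V of tilde W drops by v k - v (S k) on that piece. *)
Section ExponentialPieces.

Variables w v : nat -> R.
Hypothesis w_decr : forall k, 0 < w (S k) < w k.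
Hypothesis v_decr : forall k, v (S k) < v k.
Hypothesis w_le_v : forall k, w k <= v k.
Hypothesis v_vanish : forall eps, 0 < eps -> exists k, v k < eps.

Definition gam (k : nat) : R := (w k - w (S k)) / (v k - v (S k)).

(* Each piece covers at least a halving of 1 - r, so the pieces exhaust [0,1). *)
Hypothesis pieces_long : forall k, gam k * ln 2 <= ln (w k / w (S k)).

Lemma w_pos k : 0 < w k.
Proof. destruct k; [|apply w_decr]. pose proof (w_decr 0). lra. Qed.

Lemma gam_pos k : 0 < gam k.
Proof.
  unfold gam. pose proof (w_decr k). pose proof (v_decr k). apply Rdiv_lt_0_compat; lra.
Qed.

(* The breakpoints brk k, through lam k = ln (1 - brk k): piece k spans the
   interval where W descends from w k to w (S k). *)
Fixpoint lam (k : nat) : R :=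
  match k with O => 0 | S j => lam j - ln (w j / w (S j)) / gam j end.

Definition brk (k : nat) : R := 1 - exp (lam k).

Lemma lam_step k : lam (S k) <= lam k - ln 2.
Proof.
  simpl. pose proof (pieces_long k). pose proof (gam_pos k).
  assert (ln 2 <= ln (w k / w (S k)) / gam k).
  { apply Rmult_le_reg_r with (gam k); [lra|].
    unfold Rdiv. rewrite Rmult_assoc, Rinv_l; lra. }
  lra.
Qed.

Lemma gap_halves k : 1 - brk (S k) <= (1 - brk k) / 2.
Proof.
  unfold brk. replace (1 - (1 - exp (lam (S k)))) with (exp (lam (S k))) by ring.
  replace ((1 - (1 - exp (lam k))) / 2) with (exp (lam k - ln 2))
    by (unfold Rminus; rewrite exp_plus, exp_Ropp, exp_ln; lra).
  apply exp_le, lam_step.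
Qed.

Lemma brk_partition : partition brk.
Proof.
  assert (Hgap : forall k, 0 < 1 - brk k) by (intros; unfold brk; pose proof (exp_pos (lam k)); lra).
  assert (Hgeom : forall k, 1 - brk k <= (/ 2) ^ k).
  { induction k as [|k IH]; [unfold brk; simpl; rewrite exp_0; lra|].
    pose proof (gap_halves k). simpl. lra. }
  split.
  - unfold brk. simpl. rewrite exp_0. ring.
  - intros k. pose proof (gap_halves k). pose proof (Hgap k). lra.
  - intros a Ha.
    destruct (pow_lt_1_zero (/ 2) ltac:(rewrite Rabs_pos_eq; lra) (1 - a) ltac:(lra)) as [N HN].
    exists N. specialize (HN N (Nat.le_refl _)).
    rewrite Rabs_pos_eq in HN by (apply pow_le; lra). pose proof (Hgeom N). lra.
Qed.

Lemma brk_lt1 k : brk k < 1.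
Proof. unfold brk. pose proof (exp_pos (lam k)). lra. Qed.

Lemma ln_gap k : ln (1 - brk k) = lam k.
Proof. unfold brk. replace (1 - (1 - exp (lam k))) with (exp (lam k)) by ring. apply ln_exp. Qed.

(* Piece k of W, equal to w k * ((1 - r) / (1 - brk k)) ^ gam k, and of V. *)
Definition Wk (k : nat) (r : R) : R := w k * exp (gam k * (ln (1 - r) - lam k)).
Definition Vk (k : nat) (r : R) : R := v k + (Wk k r - w k) / gam k.

Lemma Wk_left k : Wk k (brk k) = w k.
Proof.
  unfold Wk. rewrite ln_gap. replace (gam k * (lam k - lam k)) with 0 by ring.
  rewrite exp_0. ring.
Qed.

Lemma Wk_right k : Wk k (brk (S k)) = w (S k).
Proof.
  unfold Wk. rewrite ln_gap. simpl lam. pose proof (w_decr k). pose proof (gam_pos k).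
  replace (gam k * (lam k - ln (w k / w (S k)) / gam k - lam k))
    with (- ln (w k / w (S k))) by (field; lra).
  rewrite exp_Ropp, exp_ln by (apply Rdiv_lt_0_compat; lra). field. lra.
Qed.

Lemma Vk_left k : Vk k (brk k) = v k.
Proof. unfold Vk. rewrite Wk_left. pose proof (gam_pos k). field. lra. Qed.

Lemma Vk_right k : Vk k (brk (S k)) = v (S k).
Proof.
  unfold Vk. rewrite Wk_right. pose proof (gam_pos k). pose proof (w_decr k).
  pose proof (v_decr k). unfold gam. field. lra.
Qed.

Lemma Wk_match k : Wk k (brk (S k)) = Wk (S k) (brk (S k)).
Proof. now rewrite Wk_right, Wk_left. Qed.

Lemma Vk_match k : Vk k (brk (S k)) = Vk (S k) (brk (S k)).
Proof. now rewrite Vk_right, Vk_left. Qed.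

(* The weight omega = - W' and the tails W and V, glued from the pieces. *)
Definition W : R -> R := glue brk Wk.
Definition V : R -> R := glue brk Vk.
Definition omega : R -> R := glue brk (fun k r => gam k * Wk k r / (1 - r)).

Lemma W_primitive a b : 0 <= a -> a <= b -> b < 1 -> is_RInt omega a b (W a - W b).
Proof.
  apply (glue_primitive brk brk_partition); [exact Wk_match | |]; intros k x Hx;
    pose proof (brk_lt1 (S k)).
  - unfold Wk. auto_derive; [lra|]. unfold Rminus. field. lra.
  - apply (ex_derive_continuous (K := R_AbsRing) (V := R_NormedModule)).
    unfold Wk. auto_derive. lra.
Qed.

Lemma V_primitive a b : 0 <= a -> a <= b -> b < 1 -> is_RInt (tilde W) a b (V a - V b).
Proof.
  apply (glue_primitive brk brk_partition Vk (fun k r => Wk k r / (1 - r)));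
    [exact Vk_match | |]; intros k x Hx; pose proof (brk_lt1 (S k)).
  - pose proof (gam_pos k). unfold Vk, Wk. auto_derive; [lra|]. unfold Rminus. field. lra.
  - apply (ex_derive_continuous (K := R_AbsRing) (V := R_NormedModule)).
    unfold Wk. auto_derive. lra.
Qed.

Lemma W_pos r : 0 < W r.
Proof.
  unfold W, glue, Wk. apply Rmult_lt_0_compat; [apply w_pos | apply exp_pos].
Qed.

Lemma Wk_between k r : brk k <= r <= brk (S k) -> w (S k) <= Wk k r <= w k.
Proof.
  intros Hr. pose proof (w_decr k). pose proof (gam_pos k). pose proof (brk_lt1 (S k)).
  split.
  - rewrite <- Wk_right. unfold Wk. apply Rmult_le_compat_l; [lra|]. apply exp_le.
    apply Rmult_le_compat_l; [lra|]. apply Rplus_le_compat_r, ln_le; lra.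
  - rewrite <- Wk_left. unfold Wk. apply Rmult_le_compat_l; [lra|]. apply exp_le.
    apply Rmult_le_compat_l; [lra|]. apply Rplus_le_compat_r, ln_le; lra.
Qed.

(* On piece k, W r is a convex combination of w k and w (S k), and V r is
   the same combination of v k and v (S k); hence w <= v gives W <= V. *)
Lemma W_le_V r : 0 <= r < 1 -> W r <= V r.
Proof.
  intros Hr. destruct (piece_spec brk brk_partition r Hr) as [Hlo Hhi].
  unfold W, V, glue. set (k := piece brk r) in *.
  pose proof (Wk_between k r ltac:(lra)). pose proof (w_decr k). pose proof (v_decr k).
  pose proof (w_le_v k). pose proof (w_le_v (S k)).
  unfold Vk. set (u := Wk k r) in *.
  set (th := (w k - u) / (w k - w (S k))).
  assert (Hth : 0 <= th <= 1).
  { unfold th. split; [apply Rdiv_le_0_compat; lra|].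
    apply Rmult_le_reg_r with (w k - w (S k)); [lra|]. unfold Rdiv.
    rewrite Rmult_assoc, Rinv_l; lra. }
  assert (Hu : u = (1 - th) * w k + th * w (S k)) by (unfold th; field; lra).
  assert (HV : v k + (u - w k) / gam k = (1 - th) * v k + th * v (S k))
    by (unfold gam, th; field; lra).
  rewrite HV. nra.
Qed.

Lemma W_dominated r : 0 <= r < 1 -> 0 <= W r <= V r.
Proof. intros Hr. pose proof (W_pos r). pose proof (W_le_V r Hr). lra. Qed.

Lemma V_at_brk k : V (brk k) = v k.
Proof.
  unfold V. rewrite (glue_closed brk brk_partition Vk k); [apply Vk_left | exact Vk_match |].
  pose proof (brk_partition.(partition_incr brk) k). lra.
Qed.

Lemma brk_nonneg k : 0 <= brk k.
Proof.
  rewrite <- (partition_0 brk brk_partition).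
  apply (partition_le brk brk_partition). apply Nat.le_0_l.
Qed.

Lemma V_vanishes eps : 0 < eps -> exists d, 0 < d /\
  forall t, 0 <= t < 1 -> 1 - d < t -> V t < eps.
Proof.
  intros Heps. destruct (v_vanish eps Heps) as [k Hk].
  exists (1 - brk k). split; [pose proof (brk_lt1 k); lra|]. intros t Ht Htk.
  pose proof (tail_nonincreasing W V V_primitive W_dominated (brk k) t
    (brk_nonneg k) ltac:(lra) ltac:(lra)).
  rewrite V_at_brk in *. lra.
Qed.

Lemma omega_radial_weight : radial_weight omega W.
Proof.
  split; [|split].
  - intros r Hr. unfold omega, glue. pose proof (gam_pos (piece brk r)).
    pose proof (W_pos r). unfold W, glue in *.
    apply Rdiv_le_0_compat; [apply Rmult_le_pos|]; lra.
  - apply hat_is_of_primitive; [exact W_primitive|]. intros eps Heps.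
    destruct (V_vanishes eps Heps) as [d [Hd Hsmall]]. exists d. split; [exact Hd|].
    intros t Ht Htd. pose proof (W_dominated t Ht). pose proof (Hsmall t Ht Htd).
    rewrite Rabs_pos_eq; lra.
  - intros r _. apply W_pos.
Qed.

Lemma tilde_radial_weight : radial_weight (tilde W) V.
Proof.
  split; [|split].
  - intros r Hr. unfold tilde. pose proof (W_pos r). apply Rdiv_le_0_compat; lra.
  - apply hat_is_of_primitive; [exact V_primitive|]. intros eps Heps.
    destruct (V_vanishes eps Heps) as [d [Hd Hsmall]]. exists d. split; [exact Hd|].
    intros t Ht Htd. pose proof (W_dominated t Ht). pose proof (Hsmall t Ht Htd).
    rewrite Rabs_pos_eq; lra.
  - intros r Hr. pose proof (W_dominated r Hr). pose proof (W_pos r). lra.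
Qed.

Lemma V_Dhat : Dhat V.
Proof. exact (dominated_tail_Dhat W V V_primitive W_dominated). Qed.

Lemma W_halving k : W (brk k) = exp (gam k * ln 2) * W ((1 + brk k) / 2).
Proof.
  pose proof (gap_halves k). pose proof (brk_lt1 k). pose proof (brk_partition.(partition_incr brk) k).
  unfold W. rewrite (glue_closed brk brk_partition Wk k (brk k)), Wk_left by (exact Wk_match || lra).
  rewrite (glue_closed brk brk_partition Wk k) by (exact Wk_match || lra). unfold Wk.
  replace (ln (1 - (1 + brk k) / 2)) with (lam k - ln 2).
  2:{ replace (1 - (1 + brk k) / 2) with ((1 - brk k) / 2) by field.
      rewrite ln_div, ln_gap; lra. }
  replace (gam k * (lam k - ln 2 - lam k)) with (- (gam k * ln 2)) by ring.
  rewrite exp_Ropp. field. apply Rgt_not_eq, exp_pos.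
Qed.

Lemma W_not_Dhat : (forall M, exists k, M < gam k) -> ~ Dhat W.
Proof.
  intros Hunb [C [HC HD]]. assert (Hln2 : 0 < ln 2) by (pose proof ln_lt_2; lra).
  destruct (Hunb (C / ln 2)) as [k Hk].
  assert (HCk : C < gam k * ln 2).
  { apply Rmult_lt_reg_r with (/ ln 2); [apply Rinv_0_lt_compat; lra|].
    rewrite Rmult_assoc, Rinv_r; lra. }
  pose proof (HD (brk k) (conj (brk_nonneg k) (brk_lt1 k))) as Hdbl.
  rewrite W_halving in Hdbl.
  pose proof (exp_ineq1 (gam k * ln 2) ltac:(lra)). pose proof (W_pos ((1 + brk k) / 2)).
  nra.
Qed.

End ExponentialPieces.

(* Over the double step 2n -> 2n+2 both sequences
   start at the common value level n; W first drops by the factor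
   2 ^ (n+2) while V only loses the fraction 1/(n+2), which forces the
   exponent (1 - 2^-(n+2)) (n+2); then both descend to level (S n). *)
Definition drop (n : nat) : R := / 2 ^ (n + 2).
Definition loss (n : nat) : R := / (INR n + 2).

Fixpoint level (n : nat) : R :=
  match n with O => 1 | S m => level m * drop m / 2 end.

Definition wseq (k : nat) : R :=
  if Nat.even k then level (Nat.div2 k) else level (Nat.div2 k) * drop (Nat.div2 k).
Definition vseq (k : nat) : R :=
  if Nat.even k then level (Nat.div2 k) else level (Nat.div2 k) * (1 - loss (Nat.div2 k)).

Lemma wseq_even n : wseq (2 * n) = level n.
Proof. unfold wseq. now rewrite Nat.even_mul, Nat.div2_double. Qed.
Lemma wseq_odd n : wseq (S (2 * n)) = level n * drop n.
Proof. unfold wseq. now rewrite Nat.even_succ, Nat.odd_mul, Nat.div2_succ_double. Qed.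
Lemma vseq_even n : vseq (2 * n) = level n.
Proof. unfold vseq. now rewrite Nat.even_mul, Nat.div2_double. Qed.
Lemma vseq_odd n : vseq (S (2 * n)) = level n * (1 - loss n).
Proof. unfold vseq. now rewrite Nat.even_succ, Nat.odd_mul, Nat.div2_succ_double. Qed.

Lemma wseq_next_odd n : wseq (S (S (2 * n))) = level n * drop n / 2.
Proof. replace (S (S (2 * n))) with (2 * S n)%nat by lia. now rewrite wseq_even. Qed.
Lemma vseq_next_odd n : vseq (S (S (2 * n))) = level n * drop n / 2.
Proof. replace (S (S (2 * n))) with (2 * S n)%nat by lia. now rewrite vseq_even. Qed.

Lemma parity_ind (P : nat -> Prop) :
  (forall n, P (2 * n)%nat) -> (forall n, P (S (2 * n))) -> forall k, P k.
Proof.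
  intros Heven Hodd k. destruct (Nat.Even_or_Odd k) as [[n ->]|[n ->]]; [apply Heven|].
  rewrite Nat.add_1_r. apply Hodd.
Qed.

Lemma drop_bounds n : 0 < drop n <= / 4.
Proof.
  unfold drop. split; [apply Rinv_0_lt_compat, pow_lt; lra|].
  apply Rinv_le_contravar; [lra|]. replace (n + 2)%nat with (S (S n)) by lia. simpl.
  pose proof (pow_R1_Rle 2 n ltac:(lra)). lra.
Qed.

Lemma loss_bounds n : 0 < loss n <= / 2.
Proof.
  unfold loss. pose proof (pos_INR n).
  split; [apply Rinv_0_lt_compat | apply Rinv_le_contravar]; lra.
Qed.

Lemma level_pos n : 0 < level n.
Proof.
  induction n as [|n IH]; simpl; [lra|]. pose proof (drop_bounds n).
  apply Rdiv_lt_0_compat; [apply Rmult_lt_0_compat|]; lra.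
Qed.

Lemma level_geom n : level n <= (/ 2) ^ n.
Proof.
  induction n as [|n IH]; simpl; [lra|]. pose proof (drop_bounds n). pose proof (level_pos n).
  apply Rle_trans with (level n * / 2); nra.
Qed.

Lemma wseq_decr k : 0 < wseq (S k) < wseq k.
Proof.
  revert k. apply parity_ind; intros n; pose proof (level_pos n); pose proof (drop_bounds n).
  - rewrite wseq_even, wseq_odd. nra.
  - rewrite wseq_odd, wseq_next_odd. split; [apply Rdiv_lt_0_compat|]; nra.
Qed.

Lemma vseq_decr k : vseq (S k) < vseq k.
Proof.
  revert k. apply parity_ind; intros n; pose proof (level_pos n);
    pose proof (drop_bounds n); pose proof (loss_bounds n).
  - rewrite vseq_even, vseq_odd. nra.
  - rewrite vseq_odd, vseq_next_odd. nra.
Qed.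

Lemma wseq_le_vseq k : wseq k <= vseq k.
Proof.
  revert k. apply parity_ind; intros n; pose proof (level_pos n);
    pose proof (drop_bounds n); pose proof (loss_bounds n).
  - rewrite wseq_even, vseq_even. lra.
  - rewrite wseq_odd, vseq_odd. nra.
Qed.

Lemma vseq_vanish eps : 0 < eps -> exists k, vseq k < eps.
Proof.
  intros Heps.
  destruct (pow_lt_1_zero (/ 2) ltac:(rewrite Rabs_pos_eq; lra) eps Heps) as [N HN].
  exists (2 * N)%nat. rewrite vseq_even. specialize (HN N (Nat.le_refl _)).
  rewrite Rabs_pos_eq in HN by (apply pow_le; lra). pose proof (level_geom N). lra.
Qed.

Lemma gam_even n : gam wseq vseq (2 * n) = (1 - drop n) * (INR n + 2).
Proof.
  unfold gam. rewrite wseq_even, wseq_odd, vseq_even, vseq_odd.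
  pose proof (level_pos n). pose proof (pos_INR n). unfold loss.
  field. split; lra.
Qed.

Lemma gam_odd n :
  gam wseq vseq (S (2 * n)) = (drop n / 2) / ((1 - loss n) - drop n / 2).
Proof.
  unfold gam. rewrite wseq_odd, wseq_next_odd, vseq_odd, vseq_next_odd.
  pose proof (level_pos n). pose proof (drop_bounds n). pose proof (loss_bounds n).
  assert (0 < level n * ((1 - loss n) - drop n / 2)) by (apply Rmult_lt_0_compat; lra).
  field. repeat split; nra.
Qed.

Lemma pieces_long_seq k :
  gam wseq vseq k * ln 2 <= ln (wseq k / wseq (S k)).
Proof.
  assert (Hln2 : 0 < ln 2) by (pose proof ln_lt_2; lra).
  revert k. apply parity_ind; intros n; pose proof (level_pos n);
    pose proof (drop_bounds n); pose proof (loss_bounds n).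
  - rewrite gam_even, wseq_even, wseq_odd.
    replace (level n / (level n * drop n)) with (2 ^ (n + 2))
      by (unfold drop; field; split; [apply pow_nonzero|]; lra).
    rewrite ln_pow, plus_INR by lra. replace (INR 2) with 2 by (simpl; lra).
    pose proof (pos_INR n).
    assert (0 <= drop n * (INR n + 2) * ln 2) by (apply Rmult_le_pos; [apply Rmult_le_pos|]; lra).
    nra.
  - rewrite gam_odd, wseq_odd, wseq_next_odd.
    replace (level n * drop n / (level n * drop n / 2)) with 2 by (field; nra).
    assert (drop n / 2 / (1 - loss n - drop n / 2) <= 1).
    { apply Rmult_le_reg_r with (1 - loss n - drop n / 2); [lra|].
      unfold Rdiv. rewrite Rmult_assoc, Rinv_l; lra. }
    nra.
Qed.

Lemma gam_unbounded M : exists k, M < gam wseq vseq k.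
Proof.
  destruct (INR_unbounded (2 * M)) as [n Hn]. exists (2 * n)%nat.
  rewrite gam_even. pose proof (drop_bounds n). pose proof (pos_INR n). nra.
Qed.

Theorem theorem3 :
  exists omega Womega Wtilde : R -> R,
    radial_weight omega Womega /\ ~ Dhat Womega /\
    radial_weight (tilde Womega) Wtilde /\ Dhat Wtilde.
Proof.
  pose proof wseq_decr. pose proof vseq_decr. pose proof wseq_le_vseq.
  pose proof vseq_vanish. pose proof pieces_long_seq. pose proof gam_unbounded.
  exists (omega wseq vseq), (W wseq vseq), (V wseq vseq).
  split; [|split; [|split]].
  - now apply omega_radial_weight.
  - now apply W_not_Dhat.
  - now apply tilde_radial_weight.
  - now apply V_Dhat.
Qed.
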